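(* Let $\mathbb{Z}$ be a finite-dimensional real inner product space, $\theta:\mathbb{Z}\to(-\infty,+\infty]$ proper lower semicontinuous, $h:\mathbb{Z}\to\mathbb{R}$ continuous, $\Delta\subseteq\mathbb{Z}$ nonempty closed, and consider $$(\mathrm{MP})\ \min_{z}\{\theta(z): h(z)=0,\ z\in\Delta\},\qquad (\mathrm{EPMP}_\mu)\ \min_z\{\theta(z)+\mu|h(z)|:\ z\in\Delta\}\ (\mu>0),$$ where $(\mathrm{MP})$ has a nonempty global optimal solution set $\mathcal{F}^*$ and optimal value $v^*(\mathrm{MP})$. Then: (a) $(\mathrm{MP})$ is uniformly partially calm over $\mathcal{F}^*$ if and only if $(\mathrm{EPMP}_\mu)$ is a global exact penalty of $(\mathrm{MP})$. (b) If $\theta$ is coercive or $\Delta$ is compact, then partial calmness of $(\mathrm{MP})$ over $\mathcal{F}^*$ implies that $(\mathrm{EPMP}_\mu)$ is a global exact penalty of $(\mathrm{MP})$.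
   Context: $(\mathrm{MP})$ is uniformly partially calm over $\mathcal{F}^*$ if there exists $\mu>0$ such that $\theta(z)-v^*(\mathrm{MP})+\mu|h(z)|\ge0$ for all $z\in\Delta$. Letting $\mathbb{B}$ be the closed unit ball and $\mathcal{F}_\epsilon:=\{z\in\Delta:h(z)=\epsilon\}$, $(\mathrm{MP})$ is partially calm at $z^*\in\mathcal{F}^*$ if there exist $\varepsilon>0,\mu>0$ such that for all $\epsilon\in[-\varepsilon,\varepsilon]$ and all $z\in(z^*+\varepsilon\mathbb{B})\cap\mathcal{F}_\epsilon$, $\theta(z)-\theta(z^* )+\mu|h(z)|\ge0$; it is partially calm over $\mathcal{F}^*$ if partially calm at each point of $\mathcal{F}^*$. $(\mathrm{EPMP}_\mu)$ is a global exact penalty of $(\mathrm{MP})$ if there exists $\bar\mu>0$ such that for every $\mu>\bar\mu$ the set of global optimal solutions of $(\mathrm{EPMP}_\mu)$ coincides with $\mathcal{F}^*$. *)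

From Stdlib Require Fin.
From Stdlib Require Import Reals List.
Open Scope R_scope.

(* ---------- extended reals (-oo,+oo] : None = +oo ---------- *)
Definition ER := option R.

Definition Ele (a b : ER) : Prop :=
  match a, b with
  | _, None => True
  | None, Some _ => False
  | Some x, Some y => x <= y
  end.

Definition Elt (a b : ER) : Prop :=
  match a, b with
  | None, _ => False
  | Some _, None => True
  | Some x, Some y => x < y
  end.

Definition Eaddr (a : ER) (r : R) : ER :=
  match a with None => None | Some x => Some (x + r) end.

Definition Vec (n : nat) := Fin.t n -> R.

Fixpoint fsum (n : nat) : (Fin.t n -> R) -> R :=
  match n with
  | O => fun _ => 0
  | S m => fun f => f Fin.F1 + fsum m (fun i => f (Fin.FS i))
  end.

Definition inner {n} (x y : Vec n) : R := fsum n (fun i => x i * y i).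
Definition vnorm {n} (x : Vec n) : R := sqrt (inner x x).
Definition vsub {n} (x y : Vec n) : Vec n := fun i => x i - y i.

Definition is_open {n} (U : Vec n -> Prop) : Prop :=
  forall x, U x -> exists r, 0 < r /\ forall z, vnorm (vsub z x) < r -> U z.

Definition is_closed {n} (D : Vec n -> Prop) : Prop :=
  is_open (fun z => ~ D z).

Definition is_compact {n} (D : Vec n -> Prop) : Prop :=
  forall (I : Type) (U : I -> Vec n -> Prop),
    (forall i, is_open (U i)) ->
    (forall z, D z -> exists i, U i z) ->
    exists l : list I, forall z, D z -> exists i, In i l /\ U i z.

(* proper: never -oo (built into the type) and not identically +oo *)
Definition proper_fun {n} (theta : Vec n -> ER) : Prop :=
  exists z, theta z <> None.

Definition lsc {n} (theta : Vec n -> ER) : Prop :=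
  forall x (a : R), Elt (Some a) (theta x) ->
    exists d, 0 < d /\ forall z, vnorm (vsub z x) < d -> Elt (Some a) (theta z).

Definition continuous_fun {n} (h : Vec n -> R) : Prop :=
  forall x eps, 0 < eps ->
    exists d, 0 < d /\ forall z, vnorm (vsub z x) < d -> Rabs (h z - h x) < eps.

Definition coercive {n} (theta : Vec n -> ER) : Prop :=
  forall M : R, exists r, forall z, r < vnorm z -> Ele (Some M) (theta z).

Section Problems.
Context {n : nat} (theta : Vec n -> ER) (h : Vec n -> R) (Delta : Vec n -> Prop).

Definition MP_feasible (z : Vec n) : Prop := Delta z /\ h z = 0.

Definition MP_opt (z : Vec n) : Prop :=
  MP_feasible z /\ forall z', MP_feasible z' -> Ele (theta z) (theta z').

Definition pen_obj (mu : R) (z : Vec n) : ER := Eaddr (theta z) (mu * Rabs (h z)).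

Definition EPMP_opt (mu : R) (z : Vec n) : Prop :=
  Delta z /\ forall z', Delta z' -> Ele (pen_obj mu z) (pen_obj mu z').

(* uniform partial calmness over F^*, with vstar = v^*(MP):
   theta(z) - v^* + mu |h(z)| >= 0 written as v^* <= theta(z) + mu|h(z)| *)
Definition unif_partially_calm (vstar : R) : Prop :=
  exists mu, 0 < mu /\ forall z, Delta z -> Ele (Some vstar) (pen_obj mu z).

Definition partially_calm_at (zs : Vec n) : Prop :=
  exists eps mu, 0 < eps /\ 0 < mu /\
    forall e, -eps <= e <= eps ->
    forall z, vnorm (vsub z zs) <= eps -> Delta z -> h z = e ->
      Ele (theta zs) (pen_obj mu z).

Definition partially_calm_over_Fstar : Prop :=
  forall zs, MP_opt zs -> partially_calm_at zs.

Definition global_exact_penalty : Prop :=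
  exists mubar, 0 < mubar /\
    forall mu, mubar < mu -> forall z, EPMP_opt mu z <-> MP_opt z.

End Problems.

From Stdlib Require Import Reals List Lra Lia Classical ClassicalEpsilon Rtopology.
Open Scope R_scope.

(* (a) is a direct comparison of optimal values: a uniform calmness constant mu0
   makes theta + mu |h| >= v* on Delta, and for mu > mu0 the gap (mu - mu0) |h z|
   forces every penalized minimizer to be feasible; conversely a penalized
   minimizer of (MP) witnesses the calmness inequality.
   (b) goes by contradiction: if no mu works, there are z_k in Delta with
   theta(z_k) + (k+1) |h(z_k)| < v*.  These lie in a bounded sublevel set, so a
   subsequence converges to some zbar; lower semicontinuity bounds theta below
   near zbar, which forces h(z_k) -> 0, hence h zbar = 0 and theta zbar <= v*,
   i.e. zbar is in F*.  Partial calmness at zbar with constants (eps, mu) then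
   fails at z_k once k + 1 >= mu and z_k is eps-close to zbar. *)

Lemma Ele_refl (a : ER) : Ele a a.
Proof. destruct a; simpl; auto; lra. Qed.

Lemma Ele_trans (a b c : ER) : Ele a b -> Ele b c -> Ele a c.
Proof. destruct a, b, c; simpl; auto; try lra; contradiction. Qed.

Lemma Elt_not_Ele (a b : ER) : Elt a b -> ~ Ele b a.
Proof. destruct a, b; simpl; auto; lra. Qed.

Lemma not_Ele_Elt (a b : ER) : ~ Ele a b -> Elt b a.
Proof. destruct a, b; simpl; auto; lra. Qed.

Lemma fsum_nonneg n (f : Fin.t n -> R) : (forall i, 0 <= f i) -> 0 <= fsum n f.
Proof.
  revert f; induction n as [|n IH]; intros f Hf; simpl; [lra|].
  specialize (IH (fun i => f (Fin.FS i)) (fun i => Hf _)). specialize (Hf Fin.F1). lra.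
Qed.

Lemma fsum_ge_term n (f : Fin.t n -> R) i : (forall j, 0 <= f j) -> f i <= fsum n f.
Proof.
  revert f i; induction n as [|n IH]; intros f i Hf.
  - apply (Fin.case0 (fun _ => _) i).
  - apply (Fin.caseS' i (fun i => f i <= fsum (S n) f)); simpl.
    + pose proof (fsum_nonneg n (fun i => f (Fin.FS i)) (fun i => Hf _)). lra.
    + intro p. pose proof (IH (fun i => f (Fin.FS i)) p (fun i => Hf _)).
      pose proof (Hf Fin.F1). simpl in *; lra.
Qed.

Lemma fsum_le n (f g : Fin.t n -> R) : (forall i, f i <= g i) -> fsum n f <= fsum n g.
Proof.
  revert f g; induction n as [|n IH]; intros f g H; simpl; [lra|].
  pose proof (IH (fun i => f (Fin.FS i)) (fun i => g (Fin.FS i)) (fun i => H _)).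
  pose proof (H Fin.F1). lra.
Qed.

Lemma fsum_plus n (f g : Fin.t n -> R) :
  fsum n (fun i => f i + g i) = fsum n f + fsum n g.
Proof.
  revert f g; induction n as [|n IH]; intros f g; simpl; [lra|].
  rewrite (IH (fun i => f (Fin.FS i)) (fun i => g (Fin.FS i))). ring.
Qed.

Lemma fsum_const n (c : R) : fsum n (fun _ => c) = INR n * c.
Proof.
  induction n as [|n IH]; cbn [fsum]; [simpl; lra|]. rewrite IH, S_INR. ring.
Qed.

Lemma Rabs_coord_le_vnorm n (v : Vec n) i : Rabs (v i) <= vnorm v.
Proof.
  unfold vnorm, inner.
  rewrite <- (sqrt_square (Rabs (v i)) (Rabs_pos _)).
  apply sqrt_le_1_alt.
  replace (Rabs (v i) * Rabs (v i)) with (v i * v i)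
    by (rewrite <- Rabs_mult; symmetry; apply Rabs_right; nra).
  apply (fsum_ge_term n (fun i => v i * v i)). intro; nra.
Qed.

Lemma vnorm_lt_of_coords n (v : Vec n) eps :
  0 < eps -> (forall i, Rabs (v i) < eps / (INR n + 1)) -> vnorm v < eps.
Proof.
  intros He Hv. pose proof (pos_INR n).
  set (d := eps / (INR n + 1)) in Hv.
  assert (Hd : d * (INR n + 1) = eps) by (unfold d; field; lra).
  assert (Hd0 : 0 < d) by (unfold d; apply Rdiv_lt_0_compat; lra).
  assert (Hsq : inner v v <= INR n * (d * d)).
  { unfold inner. rewrite <- fsum_const. apply fsum_le. intro i.
    specialize (Hv i). pose proof (Rabs_pos (v i)).
    rewrite <- (Rabs_right (v i * v i)), Rabs_mult by nra. nra. }
  unfold vnorm. rewrite <- (sqrt_square eps) by lra.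
  apply sqrt_lt_1_alt. split; [apply fsum_nonneg; intro; apply Rle_0_sqr | nra].
Qed.

(* The l1 norm gives open sets covering the space whose openness only needs
   [Rabs_coord_le_vnorm], avoiding the triangle inequality for [vnorm]. *)
Definition l1norm {n} (v : Vec n) : R := fsum n (fun i => Rabs (v i)).

Lemma l1norm_le_shift n (x z : Vec n) : l1norm z <= l1norm x + INR n * vnorm (vsub z x).
Proof.
  unfold l1norm. rewrite <- fsum_const, <- fsum_plus. apply fsum_le. intro i.
  pose proof (Rabs_coord_le_vnorm n (vsub z x) i). unfold vsub in *.
  pose proof (Rabs_triang (x i) (z i - x i)).
  replace (x i + (z i - x i)) with (z i) in * by ring. lra.
Qed.

Lemma l1ball_open n (r : R) : is_open (fun z : Vec n => l1norm z < r).
Proof.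
  intros x Hx. pose proof (pos_INR n).
  exists ((r - l1norm x) / (INR n + 1)). split; [apply Rdiv_lt_0_compat; lra|].
  intros z Hz. pose proof (l1norm_le_shift n x z).
  assert (INR n * vnorm (vsub z x) <= INR n * ((r - l1norm x) / (INR n + 1))).
  { apply Rmult_le_compat_l; lra. }
  assert (INR n * ((r - l1norm x) / (INR n + 1)) < r - l1norm x).
  { apply (Rmult_lt_reg_r (INR n + 1)); [lra|].
    replace (INR n * ((r - l1norm x) / (INR n + 1)) * (INR n + 1))
      with (INR n * (r - l1norm x)) by (field; lra). nra. }
  lra.
Qed.

Lemma compact_coord_bounded n (D : Vec n -> Prop) :
  is_compact D -> exists M, forall z, D z -> forall i, Rabs (z i) <= M.
Proof.
  intro HC.
  destruct (HC nat (fun k z => l1norm z < INR k)) as [L HL].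
  - intro k. apply l1ball_open.
  - intros z _. destruct (INR_unbounded (l1norm z)) as [k Hk]. exists k; lra.
  - exists (INR (list_max L)). intros z Dz i.
    destruct (HL z Dz) as [k [Hk Hz]].
    assert (HkL : (k <= list_max L)%nat).
    { assert (Hf : Forall (fun k => (k <= list_max L)%nat) L) by (apply list_max_le; lia).
      rewrite Forall_forall in Hf. auto. }
    apply le_INR in HkL.
    pose proof (fsum_ge_term n (fun i => Rabs (z i)) i (fun j => Rabs_pos _)).
    unfold l1norm in Hz. lra.
Qed.

Lemma sublevel_coord_bounded n (theta : Vec n -> ER) (Delta : Vec n -> Prop) v :
  coercive theta \/ is_compact Delta ->
  exists M, forall z, Delta z -> Ele (theta z) (Some v) -> forall i, Rabs (z i) <= M.
Proof.
  intros [Hco|Hcp].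
  - destruct (Hco (v + 1)) as [r Hr]. exists r. intros z _ Hz i.
    pose proof (Rabs_coord_le_vnorm n z i).
    destruct (Rle_lt_dec (vnorm z) r) as [Hle|Hlt]; [lra|].
    pose proof (Ele_trans _ _ _ (Hr z Hlt) Hz). simpl in *. lra.
  - destruct (compact_coord_bounded n Delta Hcp) as [M HM]. exists M. auto.
Qed.

Definition eventually (P : nat -> Prop) : Prop :=
  exists N, forall k, (N <= k)%nat -> P k.

Definition strict_incr (phi : nat -> nat) : Prop := forall k, (phi k < phi (S k))%nat.

Definition vec_cv {n} (w : nat -> Vec n) (l : Vec n) : Prop :=
  forall eps, 0 < eps -> eventually (fun k => vnorm (vsub (w k) l) < eps).

Definition coord_cv {n} (w : nat -> Vec n) (l : Vec n) : Prop :=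
  forall eps, 0 < eps -> eventually (fun k => forall i, Rabs (w k i - l i) < eps).

Lemma INR_eventually_gt (A : R) : eventually (fun k => A < INR k).
Proof.
  destruct (INR_unbounded A) as [N HN]. exists N. intros k Hk.
  apply le_INR in Hk. lra.
Qed.

Lemma eventually_and (P Q : nat -> Prop) :
  eventually P -> eventually Q -> eventually (fun k => P k /\ Q k).
Proof.
  intros [N HN] [K HK]. exists (max N K). intros k Hk. split; [apply HN|apply HK]; lia.
Qed.

Lemma eventually_witness (P : nat -> Prop) : eventually P -> exists k, P k.
Proof. intros [N HN]. exists N. apply HN; lia. Qed.

Lemma strict_incr_ge phi : strict_incr phi -> forall k, (k <= phi k)%nat.
Proof. intros H k; induction k as [|k IH]; [lia|]. specialize (H k). lia. Qed.

Lemma strict_incr_comp phi psi :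
  strict_incr phi -> strict_incr psi -> strict_incr (fun k => phi (psi k)).
Proof.
  intros Hphi Hpsi k.
  assert (Hmono : forall a b, (a < b)%nat -> (phi a < phi b)%nat).
  { intros a b Hab. induction Hab as [|b Hab IH]; [apply Hphi|].
    specialize (Hphi b). lia. }
  apply Hmono, Hpsi.
Qed.

Lemma eventually_subseq phi (P : nat -> Prop) :
  strict_incr phi -> eventually P -> eventually (fun k => P (phi k)).
Proof.
  intros Hphi [N HN]. exists N. intros k Hk.
  apply HN. pose proof (strict_incr_ge phi Hphi k). lia.
Qed.

Lemma cluster_point_subseq (u : nat -> R) (l : R) :
  (forall m eps, 0 < eps -> exists p, (m < p)%nat /\ Rabs (u p - l) < eps) ->
  exists phi, strict_incr phi /\ Un_cv (fun k => u (phi k)) l.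
Proof.
  intro Hcl.
  destruct (choice (fun (mk : nat * nat) p =>
      (fst mk < p)%nat /\ Rabs (u p - l) < / (INR (snd mk) + 1))) as [g Hg].
  { intros [m k]. apply Hcl. apply Rinv_0_lt_compat. simpl. pose proof (pos_INR k). lra. }
  (* phi (S k) lies beyond phi k and within 1/(k+2) of l. *)
  set (phi := fix f k := match k with O => g (O, O) | S k' => g (f k', k) end).
  assert (Hphi : forall k, Rabs (u (phi k) - l) < / (INR k + 1))
    by (destruct k; apply Hg).
  exists phi. split; [intro k; exact (proj1 (Hg (phi k, S k)))|].
  intros eps He. destruct (INR_eventually_gt (/ eps)) as [N HN]. exists N.
  intros k Hk. unfold Rdist. specialize (HN k Hk). pose proof (pos_INR k).
  apply (Rlt_trans _ _ _ (Hphi k)).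
  apply (Rmult_lt_reg_l (INR k + 1)); [lra|]. rewrite Rinv_r by lra.
  apply (Rmult_lt_compat_r eps) in HN; [|lra]. rewrite Rinv_l in HN; lra.
Qed.

Lemma bounded_seq_cv_subseq (u : nat -> R) M :
  (forall k, Rabs (u k) <= M) -> exists phi l, strict_incr phi /\ Un_cv (fun k => u (phi k)) l.
Proof.
  intro HM.
  destruct (Bolzano_Weierstrass u (fun c => -M <= c <= M) (compact_P3 (-M) M)) as [l Hl].
  { intro k. specialize (HM k). split_Rabs; lra. }
  destruct (cluster_point_subseq u l) as [phi Hphi].
  - intros m eps He. destruct (Hl (disc l (mkposreal _ He)) (S m)) as [p [Hp Hd]].
    + exists (mkposreal _ He). intros y Hy. exact Hy.
    + exists p. split; [lia|exact Hd].
  - exists phi, l. exact Hphi.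
Qed.

Lemma bounded_vec_seq_coord_cv_subseq n (z : nat -> Vec n) M :
  (forall k i, Rabs (z k i) <= M) ->
  exists phi (l : Vec n), strict_incr phi /\ coord_cv (fun k => z (phi k)) l.
Proof.
  revert z; induction n as [|n IH]; intros z HM.
  - exists (fun k => k), (z O). split; [intro; lia|].
    intros eps He. exists O. intros k _ i. apply (Fin.case0 (fun _ => _) i).
  - destruct (IH (fun k i => z k (Fin.FS i)) (fun k i => HM _ _)) as [phi [l [Hphi Hl]]].
    destruct (bounded_seq_cv_subseq (fun k => z (phi k) Fin.F1) M (fun k => HM _ _))
      as [psi [l0 [Hpsi Hl0]]].
    exists (fun k => phi (psi k)), (fun i => Fin.caseS' i (fun _ => R) l0 l).
    split; [apply strict_incr_comp; auto|].
    intros eps He.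
    destruct (eventually_and _ _ (Hl0 eps He) (eventually_subseq psi _ Hpsi (Hl eps He)))
      as [N HN].
    exists N. intros k Hk i. destruct (HN k Hk) as [H0 HS].
    apply (Fin.caseS' i (fun i =>
      Rabs (z (phi (psi k)) i - Fin.caseS' i (fun _ => R) l0 l) < eps)); [exact H0|].
    intro p. apply HS.
Qed.

Lemma coord_cv_vec_cv n (w : nat -> Vec n) l : coord_cv w l -> vec_cv w l.
Proof.
  intros Hw eps He. pose proof (pos_INR n).
  destruct (Hw (eps / (INR n + 1))) as [N HN]; [apply Rdiv_lt_0_compat; lra|].
  exists N. intros k Hk. apply vnorm_lt_of_coords; [exact He|]. apply HN, Hk.
Qed.

Lemma bounded_vec_seq_cv_subseq n (z : nat -> Vec n) M :
  (forall k i, Rabs (z k i) <= M) ->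
  exists phi (l : Vec n), strict_incr phi /\ vec_cv (fun k => z (phi k)) l.
Proof.
  intro HM. destruct (bounded_vec_seq_coord_cv_subseq n z M HM) as [phi [l [Hphi Hl]]].
  exists phi, l. split; [exact Hphi|]. apply coord_cv_vec_cv, Hl.
Qed.

Lemma closed_vec_cv_mem n (D : Vec n -> Prop) (w : nat -> Vec n) l :
  is_closed D -> (forall k, D (w k)) -> vec_cv w l -> D l.
Proof.
  intros Hcl Hw Hcv. apply NNPP. intro Hl.
  destruct (Hcl l Hl) as [r [Hr Hball]].
  destruct (eventually_witness _ (Hcv r Hr)) as [k Hk].
  exact (Hball (w k) Hk (Hw k)).
Qed.

Lemma continuous_vec_cv n (h : Vec n -> R) (w : nat -> Vec n) l :
  continuous_fun h -> vec_cv w l -> Un_cv (fun k => h (w k)) (h l).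
Proof.
  intros Hh Hcv eps He.
  destruct (Hh l eps He) as [d [Hd Hball]].
  destruct (Hcv d Hd) as [N HN]. exists N. intros k Hk. apply Hball, HN, Hk.
Qed.

Lemma lsc_locally_bounded_below n (theta : Vec n -> ER) :
  lsc theta -> forall x, exists a d, 0 < d /\
    forall z, vnorm (vsub z x) < d -> Elt (Some a) (theta z).
Proof.
  intros Hlsc x. destruct (theta x) as [tx|] eqn:Ex.
  - exists (tx - 1). apply Hlsc. rewrite Ex. simpl. lra.
  - exists 0. apply Hlsc. rewrite Ex. exact I.
Qed.

Lemma lsc_vec_cv_le n (theta : Vec n -> ER) (w : nat -> Vec n) l v :
  lsc theta -> vec_cv w l -> (forall k, Ele (theta (w k)) (Some v)) ->
  Ele (theta l) (Some v).
Proof.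
  intros Hlsc Hcv Hw. apply NNPP. intro Hl.
  destruct (Hlsc l v (not_Ele_Elt _ _ Hl)) as [d [Hd Hball]].
  destruct (eventually_witness _ (Hcv d Hd)) as [k Hk].
  exact (Elt_not_Ele _ _ (Hball (w k) Hk) (Hw k)).
Qed.

Section ExactPenalty.
Variables (n : nat) (theta : Vec n -> ER) (h : Vec n -> R) (Delta : Vec n -> Prop).
Variables (vstar : R) (zs : Vec n).
Hypothesis zs_opt : MP_opt theta h Delta zs.
Hypothesis value_opt : forall z, MP_opt theta h Delta z -> theta z = Some vstar.

Lemma pen_obj_feasible mu z : h z = 0 -> pen_obj theta h mu z = theta z.
Proof.
  intro hz. unfold pen_obj, Eaddr. rewrite hz, Rabs_R0, Rmult_0_r.
  destruct (theta z); [rewrite Rplus_0_r|]; reflexivity.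
Qed.

Lemma pen_obj_mono mu mu' z : mu <= mu' -> Ele (pen_obj theta h mu z) (pen_obj theta h mu' z).
Proof.
  intro Hmu. unfold pen_obj, Eaddr. destruct (theta z); simpl; [|exact I].
  pose proof (Rabs_pos (h z)). nra.
Qed.

Lemma pen_obj_gap_feasible mu0 mu z v : mu0 < mu ->
  Ele (Some v) (pen_obj theta h mu0 z) -> Ele (pen_obj theta h mu z) (Some v) -> h z = 0.
Proof.
  intros Hmu H0 H1. unfold pen_obj, Eaddr in *.
  destruct (theta z); simpl in *; [|contradiction].
  destruct (Req_dec (h z) 0) as [E|E]; [exact E|].
  pose proof (Rabs_pos_lt _ E). nra.
Qed.

Lemma MP_opt_char z :
  MP_opt theta h Delta z <-> MP_feasible h Delta z /\ Ele (theta z) (Some vstar).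
Proof.
  split.
  - intros Hz. split; [apply Hz|]. rewrite (value_opt z Hz). apply Ele_refl.
  - intros [Hf Hle]. split; [exact Hf|]. intros z' Hf'.
    rewrite <- (value_opt zs zs_opt) in Hle.
    exact (Ele_trans _ _ _ Hle (proj2 zs_opt z' Hf')).
Qed.

Lemma unif_calm_exact_penalty :
  unif_partially_calm theta h Delta vstar -> global_exact_penalty theta h Delta.
Proof.
  intros [mu0 [Hmu0 Hcalm]]. exists mu0. split; [exact Hmu0|].
  intros mu Hmu z.
  assert (Hzs : pen_obj theta h mu zs = Some vstar)
    by (rewrite pen_obj_feasible by apply zs_opt; apply value_opt, zs_opt).
  split.
  - intros [Dz Hmin]. specialize (Hmin zs (proj1 (proj1 zs_opt))). rewrite Hzs in Hmin.
    assert (hz : h z = 0) by exact (pen_obj_gap_feasible mu0 mu z vstar Hmu (Hcalm z Dz) Hmin).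
    apply MP_opt_char. rewrite <- (pen_obj_feasible mu z hz). split; [split|]; auto.
  - intros Hz. destruct (proj1 Hz) as [Dz hz]. split; [exact Dz|]. intros z' Dz'.
    rewrite (pen_obj_feasible mu z hz), (value_opt z Hz).
    apply (Ele_trans _ _ _ (Hcalm z' Dz')), pen_obj_mono. lra.
Qed.

Lemma exact_penalty_unif_calm :
  global_exact_penalty theta h Delta -> unif_partially_calm theta h Delta vstar.
Proof.
  intros [mub [Hmub Hpen]]. exists (mub + 1). split; [lra|]. intros z Dz.
  destruct (proj2 (Hpen (mub + 1) ltac:(lra) zs) zs_opt) as [_ Hmin].
  specialize (Hmin z Dz).
  rewrite pen_obj_feasible, (value_opt zs zs_opt) in Hmin by apply zs_opt.
  exact Hmin.
Qed.

Lemma not_unif_calm_violations : ~ unif_partially_calm theta h Delta vstar ->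
  exists (z : nat -> Vec n) (t : nat -> R), forall k,
    Delta (z k) /\ theta (z k) = Some (t k) /\ t k + (INR k + 1) * Rabs (h (z k)) < vstar.
Proof.
  intro Hnot.
  assert (Hk : forall k : nat, exists p : Vec n * R,
    Delta (fst p) /\ theta (fst p) = Some (snd p) /\
    snd p + (INR k + 1) * Rabs (h (fst p)) < vstar).
  { intro k. apply NNPP. intro Hno. apply Hnot.
    exists (INR k + 1). split; [pose proof (pos_INR k); lra|].
    intros z Dz. unfold pen_obj, Eaddr. destruct (theta z) as [s|] eqn:Es; [|exact I].
    apply Rnot_lt_le. intro Hlt. apply Hno. exists (z, s). auto. }
  destruct (choice _ Hk) as [f Hf].
  exists (fun k => fst (f k)), (fun k => snd (f k)). exact Hf.
Qed.

Section Violations.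
Variables (w : nat -> Vec n) (t : nat -> R) (l : Vec n).
Hypothesis theta_lsc : lsc theta.
Hypothesis w_cv : vec_cv w l.
Hypothesis violation : forall k,
  Delta (w k) /\ theta (w k) = Some (t k) /\ t k + (INR k + 1) * Rabs (h (w k)) < vstar.

(* Near [l] the values [t k] stay above some [a], so [(k+1) |h (w k)| < vstar - a]. *)
Lemma violation_h_cv0 : Un_cv (fun k => h (w k)) 0.
Proof.
  destruct (lsc_locally_bounded_below n theta theta_lsc l) as [a [d [Hd Ha]]].
  intros eps He.
  destruct (eventually_and _ _ (w_cv d Hd) (INR_eventually_gt ((vstar - a) / eps)))
    as [N HN].
  exists N. intros k Hk. destruct (HN k Hk) as [Hnear Hbig].
  destruct (violation k) as [_ [Ek Hk']]. specialize (Ha _ Hnear). rewrite Ek in Ha. simpl in Ha.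
  unfold Rdist. rewrite Rminus_0_r. pose proof (Rabs_pos (h (w k))).
  apply (Rmult_lt_compat_r eps) in Hbig; [|lra].
  replace ((vstar - a) / eps * eps) with (vstar - a) in Hbig by (field; lra).
  pose proof (pos_INR k). apply (Rmult_lt_reg_l (INR k + 1)); nra.
Qed.

Lemma violation_limit_feasible : continuous_fun h -> h l = 0.
Proof.
  intro Hh. exact (UL_sequence _ _ _ (continuous_vec_cv n h w l Hh w_cv) violation_h_cv0).
Qed.

Lemma violation_limit_not_calm :
  Ele (Some vstar) (theta l) -> ~ partially_calm_at theta h Delta l.
Proof.
  intros Hl [eps [mu [He [Hmu Hcalm]]]].
  destruct (eventually_witness _ (eventually_and _ _ (w_cv eps He)
    (eventually_and _ _ (violation_h_cv0 eps He) (INR_eventually_gt mu))))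
    as [k [Hnear [Hh Hbig]]].
  unfold Rdist in Hh. rewrite Rminus_0_r in Hh.
  destruct (Rabs_def2 _ _ Hh) as [Hh1 Hh2].
  destruct (violation k) as [Dk [Ek Hk]].
  pose proof (Ele_trans _ _ _ Hl
    (Hcalm (h (w k)) ltac:(lra) (w k) ltac:(lra) Dk eq_refl)) as Hle.
  unfold pen_obj, Eaddr in Hle. rewrite Ek in Hle. simpl in Hle.
  pose proof (Rabs_pos (h (w k))). nra.
Qed.

End Violations.

Lemma partially_calm_unif_calm :
  lsc theta -> continuous_fun h -> is_closed Delta ->
  (exists M, forall z, Delta z -> Ele (theta z) (Some vstar) -> forall i, Rabs (z i) <= M) ->
  partially_calm_over_Fstar theta h Delta -> unif_partially_calm theta h Delta vstar.
Proof.
  intros Hlsc Hh Hcl [M HM] Hpc. apply NNPP. intro Hnot.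
  destruct (not_unif_calm_violations Hnot) as [z [t Hz]].
  destruct (bounded_vec_seq_cv_subseq n z M) as [phi [l [Hphi Hcv]]].
  { intros k. destruct (Hz k) as [Dk [Ek Hk]]. apply HM; [exact Dk|].
    rewrite Ek. simpl. pose proof (pos_INR k). pose proof (Rabs_pos (h (z k))). nra. }
  set (w := fun k => z (phi k)) in Hcv.
  assert (Hw : forall k, Delta (w k) /\ theta (w k) = Some (t (phi k)) /\
                 t (phi k) + (INR k + 1) * Rabs (h (w k)) < vstar).
  { intro k. destruct (Hz (phi k)) as [Dk [Ek Hk]]. repeat split; auto.
    pose proof (le_INR _ _ (strict_incr_ge phi Hphi k)).
    pose proof (Rabs_pos (h (z (phi k)))). unfold w. nra. }
  assert (Hl_opt : MP_opt theta h Delta l).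
  { apply MP_opt_char. split; [split|].
    - exact (closed_vec_cv_mem n Delta w l Hcl (fun k => proj1 (Hw k)) Hcv).
    - exact (violation_limit_feasible w _ l Hlsc Hcv Hw Hh).
    - apply (lsc_vec_cv_le n theta w l vstar Hlsc Hcv). intro k.
      destruct (Hw k) as [_ [Ek Hk]]. rewrite Ek. simpl.
      pose proof (pos_INR k). pose proof (Rabs_pos (h (w k))). nra. }
  apply (violation_limit_not_calm w _ l Hlsc Hcv Hw); [|exact (Hpc l Hl_opt)].
  rewrite (value_opt l Hl_opt). apply Ele_refl.
Qed.

End ExactPenalty.

Theorem proposition2p1 (n : nat) (theta : Vec n -> ER) (h : Vec n -> R)
  (Delta : Vec n -> Prop) (vstar : R) :
  proper_fun theta -> lsc theta -> continuous_fun h ->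
  (exists z, Delta z) -> is_closed Delta ->
  (exists z, MP_opt theta h Delta z) ->
  (forall z, MP_opt theta h Delta z -> theta z = Some vstar) ->
  (unif_partially_calm theta h Delta vstar <-> global_exact_penalty theta h Delta) /\
  ((coercive theta \/ is_compact Delta) ->
     partially_calm_over_Fstar theta h Delta -> global_exact_penalty theta h Delta).
Proof.
  intros _ Hlsc Hh _ Hcl [zs Hzs] Hval.
  split.
  - split.
    + exact (unif_calm_exact_penalty n theta h Delta vstar zs Hzs Hval).
    + exact (exact_penalty_unif_calm n theta h Delta vstar zs Hzs Hval).
  - intros Hbnd Hpc.
    apply (unif_calm_exact_penalty n theta h Delta vstar zs Hzs Hval).
    apply (partially_calm_unif_calm n theta h Delta vstar zs Hzs Hval Hlsc Hh Hcl); [|exact Hpc].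
    exact (sublevel_coord_bounded n theta Delta vstar Hbnd).
Qed.
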